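(* Let $n, l_z, l_c \ge 1$ be integers, let $\alpha>0$ and $\beta_d>0$ be constants, and let the following signals be defined on $[0,\infty)$: $e:[0,\infty)\to\mathbb{R}^n$ continuously differentiable; $\delta_3:[0,\infty)\to\mathbb{R}^n$ and $D:[0,\infty)\to\mathbb{R}^n$ twice continuously differentiable; for $j=1,\dots,l_z$, $\tilde z_j:[0,\infty)\to\mathbb{R}$ and $w_j:[0,\infty)\to\mathbb{R}^n$ continuously differentiable, and $\Lambda_j:[0,\infty)\to\mathbb{R}^{l_c}$, $v:[0,\infty)\to\mathbb{R}^{l_c}$, $\tilde w_j:[0,\infty)\to\mathbb{R}^n$ continuous. Define $s(t)\triangleq \dot e(t)+\alpha e(t)$, $$M_1(t)\triangleq\sum_{j=1}^{l_z}\tilde z_j(t)\,w_j(t),\qquad M_2(t)\triangleq\sum_{j=1}^{l_z}\big(\Lambda_j(t)^T v(t)\big)\,\tilde w_j(t).$$ Assume there are positive constants $\dot{\bar\delta}_3,\ddot{\bar\delta}_3,c_{d_1},c_{d_2},c_{M_1},c_{\dot M_1},c_{M_2}$ such that for all $t\ge0$: $\|\dot\delta_3(t)\|_1<\dot{\bar\delta}_3$, $\|\ddot\delta_3(t)\|_1<\ddot{\bar\delta}_3$, $\|\dot D(t)\|\le c_{d_1}$, $\|\ddot D(t)\|\le c_{d_2}$, $\|M_1(t)\|_1<c_{M_1}$, $\|\dot M_1(t)\|_1<c_{\dot M_1}$, $\|M_2(t)\|_1<c_{M_2}$. Define the scalar signal $\Omega$ by $$\Omega(t)=\Omega(0)+\int_0^t\Big[-s(\tau)^T\big(\dot\delta_3(\tau)+\dot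 D(\tau)-\beta_d\,\mathrm{sgn}(e(\tau))\big)-M_1(\tau)^T\dot e(\tau)-M_2(\tau)^Te(\tau)\Big]d\tau,$$ with $$\Omega(0)=\beta_d\|e(0)\|_1-e(0)^T\big(\dot\delta_3(0)+\dot D(0)+M_1(0)\big).$$ If $$\beta_d\ \ge\ \dot{\bar\delta}_3+c_{d_1}+c_{M_1}+\frac{1}{\alpha}\big(\ddot{\bar\delta}_3+c_{d_2}+c_{\dot M_1}+c_{M_2}\big),$$ then $\Omega(t)\ge0$ for all $t\ge0$.
   Context: $\|\cdot\|$ denotes the Euclidean norm and $\|\cdot\|_1$ the $\ell_1$ norm on $\mathbb{R}^n$; $\mathrm{sgn}(\cdot)$ is the standard sign function applied componentwise (with $\mathrm{sgn}(0)=0$). In the paper's application, $e$ is a filtered tracking error, $\delta_3$ is the estimation error of a steady-state control term, $D(t)=g^{-1}(\bar x(t))d(t)$ is the input-transformed disturbance, $\tilde z_j$ and $\tilde w_j$ are parameter estimation errors of an adaptor network, and $v$ are critic weights; for the lemma only the stated regularity and bounds are used. *)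

From Stdlib Require Import Reals Lra.
From Coquelicot Require Import Coquelicot.
Open Scope R_scope.

(* Vectors in R^k are represented as functions nat -> R; only indices i < k matter. *)

Fixpoint sumR (k : nat) (f : nat -> R) : R :=
  match k with
  | O => 0
  | S m => sumR m f + f m
  end.

Definition dotR (k : nat) (x y : nat -> R) : R := sumR k (fun i => x i * y i).
Definition norm2 (k : nat) (x : nat -> R) : R := sqrt (dotR k x x).
Definition norm1 (k : nat) (x : nat -> R) : R := sumR k (fun i => Rabs (x i)).

Definition sgn (x : R) : R :=
  if Rlt_dec 0 x then 1 else if Rlt_dec x 0 then -1 else 0.

Definition cont_on0 (f : R -> R) : Prop :=
  forall t, 0 <= t ->
    filterlim f (within (fun s => 0 <= s) (locally t)) (locally (f t)).

Definition deriv_on0 (f f' : R -> R) : Prop :=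
  forall t, 0 <= t ->
    filterlim (fun h => (f (t + h) - f t) / h)
      (within (fun h => h <> 0 /\ 0 <= t + h) (locally 0)) (locally (f' t)).

Definition C1_on0 (f f' : R -> R) : Prop := deriv_on0 f f' /\ cont_on0 f'.

Definition vcont_on0 (k : nat) (f : R -> nat -> R) : Prop :=
  forall i, (i < k)%nat -> cont_on0 (fun t => f t i).
Definition vC1_on0 (k : nat) (f f' : R -> nat -> R) : Prop :=
  forall i, (i < k)%nat -> C1_on0 (fun t => f t i) (fun t => f' t i).

From Stdlib Require Import Reals Lra Lia Classical.
From Coquelicot Require Import Coquelicot.
Open Scope R_scope.

(* With [P := beta_d |e|_1 - e^T (d3' + D' + M1)] the gain condition gives [P >= 0], and
   [Omega 0 = P 0], so it suffices that [Omega - P] is nondecreasing.  Formally its derivative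
   is [alpha beta_d |e|_1 + e^T (d3'' + D'' + M1' - alpha (d3' + D') - M2) >= 0]; since [|e|_1]
   is only one-sidedly differentiable and [sgn e] is discontinuous, this is made rigorous
   coordinatewise with right Dini derivatives: at every time the right lower limit of the
   integrand dominates the upper right Dini derivative of [P] (the right derivative of [|e_i|]
   is [sgn(e_i) e_i'], or [|e_i'|] where [e_i = 0]), and a continuous function whose lower
   right Dini derivative is nonnegative is nondecreasing. *)

Lemma sumR_ext (k : nat) (f g : nat -> R) :
  (forall i, (i < k)%nat -> f i = g i) -> sumR k f = sumR k g.
Proof.
  induction k as [|k IH]; intros Hfg; simpl; [reflexivity|].
  rewrite IH, Hfg; [reflexivity|lia|intros i Hi; apply Hfg; lia].
Qed.

Lemma sumR_opp (k : nat) (f : nat -> R) : sumR k (fun i => - f i) = - sumR k f.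
Proof. induction k as [|k IH]; simpl; [ring|rewrite IH; ring]. Qed.

Lemma sumR_minus (k : nat) (f g : nat -> R) :
  sumR k (fun i => f i - g i) = sumR k f - sumR k g.
Proof. induction k as [|k IH]; simpl; [ring|rewrite IH; ring]. Qed.

Lemma sumR_scal (k : nat) (c : R) (f : nat -> R) : sumR k (fun i => c * f i) = c * sumR k f.
Proof. induction k as [|k IH]; simpl; [ring|rewrite IH; ring]. Qed.

Lemma sumR_nonneg (k : nat) (f : nat -> R) :
  (forall i, (i < k)%nat -> 0 <= f i) -> 0 <= sumR k f.
Proof.
  induction k as [|k IH]; intros Hf; simpl; [lra|].
  assert (0 <= sumR k f) by (apply IH; intros; apply Hf; lia).
  assert (0 <= f k) by (apply Hf; lia); lra.
Qed.

Lemma sumR_ge_term (k i : nat) (f : nat -> R) :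
  (forall j, (j < k)%nat -> 0 <= f j) -> (i < k)%nat -> f i <= sumR k f.
Proof.
  induction k as [|k IH]; intros Hf Hi; simpl; [lia|].
  assert (0 <= sumR k f) by (apply sumR_nonneg; intros; apply Hf; lia).
  destruct (Nat.eq_dec i k) as [->|Hik]; [lra|].
  assert (f i <= sumR k f) by (apply IH; [intros; apply Hf|]; lia).
  assert (0 <= f k) by (apply Hf; lia); lra.
Qed.

Lemma Rabs_le_norm1 (k i : nat) (x : nat -> R) : (i < k)%nat -> Rabs (x i) <= norm1 k x.
Proof. intros Hi; apply (sumR_ge_term k i (fun j => Rabs (x j))); auto using Rabs_pos. Qed.

Lemma Rabs_le_norm2 (k i : nat) (x : nat -> R) : (i < k)%nat -> Rabs (x i) <= norm2 k x.
Proof.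
  intros Hi; unfold norm2, dotR; rewrite <- sqrt_Rsqr_abs; apply sqrt_le_1_alt.
  apply (sumR_ge_term k i (fun j => x j * x j)); [intros; nra|exact Hi].
Qed.

Definition within_nonneg (t : R) := within (fun x : R => 0 <= x) (locally t).

Global Instance within_nonneg_filter (t : R) : Filter (within_nonneg t).
Proof. apply within_filter, locally_filter. Qed.

Definition cont_nn (f : R -> R) (t : R) : Prop :=
  filterlim f (within_nonneg t) (locally (f t)).

Lemma at_right_of_within_nonneg (t : R) (P : R -> Prop) :
  0 <= t -> within_nonneg t P -> at_right t P.
Proof. intros Ht [d Hd]; exists d; intros y Hy Hty; apply Hd; auto; lra. Qed.

Lemma cont_nn_ball (f : R -> R) (t eps : R) :
  cont_nn f t -> 0 < eps -> within_nonneg t (fun x => Rabs (f x - f t) < eps).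
Proof. intros Hf He; exact (proj1 (filterlim_locally f (f t)) Hf (mkposreal eps He)). Qed.

Lemma cont_nn_ext (f g : R -> R) (t : R) :
  (forall x, f x = g x) -> cont_nn f t -> cont_nn g t.
Proof. intros Hfg Hf; unfold cont_nn; rewrite <- Hfg; exact (filterlim_ext _ _ Hfg Hf). Qed.

Section ContinuityRules.
Variable t : R.

Lemma cont_nn_const (c : R) : cont_nn (fun _ => c) t.
Proof. apply filterlim_const. Qed.

Lemma cont_nn_id : cont_nn (fun x => x) t.
Proof. apply (filterlim_filter_le_1 _ (filter_le_within _)), filterlim_id. Qed.

Lemma cont_nn_plus (f g : R -> R) :
  cont_nn f t -> cont_nn g t -> cont_nn (fun x => f x + g x) t.
Proof. intros Hf Hg; exact (filterlim_comp_2 f g Rplus Hf Hg (filterlim_plus _ _)). Qed.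

Lemma cont_nn_opp (f : R -> R) : cont_nn f t -> cont_nn (fun x => - f x) t.
Proof. intros Hf; exact (filterlim_comp _ _ _ f Ropp _ _ _ Hf (filterlim_opp _)). Qed.

Lemma cont_nn_minus (f g : R -> R) :
  cont_nn f t -> cont_nn g t -> cont_nn (fun x => f x - g x) t.
Proof. intros Hf Hg; exact (cont_nn_plus _ _ Hf (cont_nn_opp _ Hg)). Qed.

Lemma cont_nn_mult (f g : R -> R) :
  cont_nn f t -> cont_nn g t -> cont_nn (fun x => f x * g x) t.
Proof.
  intros Hf Hg; exact (filterlim_comp_2 f g Rmult Hf Hg (@filterlim_mult R_AbsRing _ _)).
Qed.

Lemma cont_nn_abs (f : R -> R) : cont_nn f t -> cont_nn (fun x => Rabs (f x)) t.
Proof. intros Hf; exact (filterlim_comp _ _ _ f Rabs _ _ _ Hf (continuous_Rabs _)). Qed.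

Lemma cont_nn_sumR (k : nat) (g : nat -> R -> R) :
  (forall i, (i < k)%nat -> cont_nn (g i) t) -> cont_nn (fun x => sumR k (fun i => g i x)) t.
Proof.
  induction k as [|k IH]; intros Hg; simpl.
  - apply cont_nn_const.
  - apply cont_nn_plus; [apply IH; intros i Hi|]; apply Hg; lia.
Qed.

End ContinuityRules.

#[export] Hint Resolve cont_nn_const cont_nn_id cont_nn_plus cont_nn_opp cont_nn_minus
  cont_nn_mult cont_nn_abs : cont_nn.

Lemma cont_nn_dotR (k : nat) (x y : R -> nat -> R) (t : R) :
  (forall i, (i < k)%nat -> cont_nn (fun s => x s i) t) ->
  (forall i, (i < k)%nat -> cont_nn (fun s => y s i) t) ->
  cont_nn (fun s => dotR k (x s) (y s)) t.
Proof.
  intros Hx Hy; apply (cont_nn_sumR t k (fun i s => x s i * y s i)); intros i Hi.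
  apply cont_nn_mult; auto.
Qed.

(* Carathéodory differentiability at [t] relative to [[0, +oo)]: the difference quotient
   extends to a function continuous at [t]. *)
Definition has_slope_nn (f : R -> R) (d t : R) : Prop :=
  exists q : R -> R, cont_nn q t /\ q t = d /\ forall x, f x = f t + (x - t) * q x.

Lemma has_slope_of_deriv_on0 (f f' : R -> R) (t : R) :
  deriv_on0 f f' -> 0 <= t -> has_slope_nn f (f' t) t.
Proof.
  intros Hf Ht.
  exists (fun x => if Req_dec_T x t then f' t else (f x - f t) / (x - t)).
  split; [|split].
  - apply filterlim_locally; intros eps.
    destruct (Req_dec_T t t) as [_|]; [|congruence].
    destruct (proj1 (filterlim_locally _ _) (Hf t Ht) eps) as [d Hd].
    exists d; intros x Hx Hx0; change R in x.
    destruct (Req_dec_T x t) as [_|Hxt]; [apply ball_center|].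
    assert (Hh : ball 0 d (x - t)).
    { change (Rabs (x - t) < d) in Hx; change (Rabs (x - t - 0) < d); now rewrite Rminus_0_r. }
    assert (Hdom : x - t <> 0 /\ 0 <= t + (x - t)) by (split; [intro; apply Hxt|]; lra).
    specialize (Hd (x - t) Hh Hdom).
    now replace (t + (x - t)) with x in Hd by ring.
  - now destruct (Req_dec_T t t).
  - intros x; destruct (Req_dec_T x t) as [->|Hxt]; [ring|field; lra].
Qed.

Lemma has_slope_cont (f : R -> R) (d t : R) : has_slope_nn f d t -> cont_nn f t.
Proof.
  intros (q & Hq & _ & Hf).
  apply (cont_nn_ext (fun x => f t + (x - t) * q x)); [intros x; now rewrite <- Hf|].
  auto with cont_nn.
Qed.

Section SlopeRules.
Variable t : R.

Lemma has_slope_const (c : R) : has_slope_nn (fun _ => c) 0 t.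
Proof. exists (fun _ => 0); repeat split; [apply cont_nn_const|intros; ring]. Qed.

Lemma has_slope_plus (f g : R -> R) (df dg : R) :
  has_slope_nn f df t -> has_slope_nn g dg t -> has_slope_nn (fun x => f x + g x) (df + dg) t.
Proof.
  intros (qf & Hqf & <- & Hf) (qg & Hqg & <- & Hg).
  exists (fun x => qf x + qg x); repeat split; auto with cont_nn.
  intros x; rewrite (Hf x), (Hg x); ring.
Qed.

Lemma has_slope_opp (f : R -> R) (df : R) :
  has_slope_nn f df t -> has_slope_nn (fun x => - f x) (- df) t.
Proof.
  intros (qf & Hqf & <- & Hf).
  exists (fun x => - qf x); repeat split; auto with cont_nn.
  intros x; rewrite (Hf x); ring.
Qed.

Lemma has_slope_mult (f g : R -> R) (df dg : R) :
  has_slope_nn f df t -> has_slope_nn g dg t ->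
  has_slope_nn (fun x => f x * g x) (df * g t + f t * dg) t.
Proof.
  intros Hfs Hgs.
  assert (Hgc := has_slope_cont _ _ _ Hgs).
  destruct Hfs as (qf & Hqf & <- & Hf); destruct Hgs as (qg & Hqg & <- & Hg).
  exists (fun x => qf x * g x + f t * qg x); repeat split; auto with cont_nn.
  intros x; rewrite (Hf x), (Hg x); ring.
Qed.

Lemma has_slope_sumR (k : nat) (g : nat -> R -> R) (dg : nat -> R) :
  (forall i, (i < k)%nat -> has_slope_nn (g i) (dg i) t) ->
  has_slope_nn (fun x => sumR k (fun i => g i x)) (sumR k dg) t.
Proof.
  induction k as [|k IH]; intros Hg; simpl.
  - apply has_slope_const.
  - apply has_slope_plus; [apply IH; intros i Hi|]; apply Hg; lia.
Qed.

End SlopeRules.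

Lemma has_slope_sumR_mult (k : nat) (a a' b b' : nat -> R -> R) (t : R) :
  (forall j, (j < k)%nat -> C1_on0 (a j) (a' j)) ->
  (forall j, (j < k)%nat -> C1_on0 (b j) (b' j)) -> 0 <= t ->
  has_slope_nn (fun x => sumR k (fun j => a j x * b j x))
    (sumR k (fun j => a' j t * b j t + a j t * b' j t)) t.
Proof.
  intros Ha Hb Ht; apply (has_slope_sumR t k (fun j x => a j x * b j x)); intros j Hj.
  apply has_slope_mult; apply has_slope_of_deriv_on0; auto; [apply (Ha j Hj)|apply (Hb j Hj)].
Qed.

Definition right_liminf_ge (f : R -> R) (L t : R) : Prop :=
  forall eps, 0 < eps -> at_right t (fun x => L - eps <= f x).

Definition upper_rdini_le (f : R -> R) (L t : R) : Prop :=
  forall eps, 0 < eps -> at_right t (fun x => f x - f t <= (L + eps) * (x - t)).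

Definition lower_rdini_ge (f : R -> R) (L t : R) : Prop :=
  forall eps, 0 < eps -> at_right t (fun x => (L - eps) * (x - t) <= f x - f t).

Lemma at_right_gt (t : R) : at_right t (fun x => t < x).
Proof. exists (mkposreal 1 Rlt_0_1); auto. Qed.

Section RightLimits.
Variable t : R.
Hypothesis Ht : 0 <= t.

Lemma cont_nn_right_ball (f : R -> R) (eps : R) :
  cont_nn f t -> 0 < eps -> at_right t (fun x => Rabs (f x - f t) < eps).
Proof. intros Hf He; exact (at_right_of_within_nonneg _ _ Ht (cont_nn_ball _ _ _ Hf He)). Qed.

Lemma right_liminf_ge_of_cont (f r : R -> R) :
  cont_nn r t -> at_right t (fun x => r x <= f x) -> right_liminf_ge f (r t) t.
Proof.
  intros Hr Hrf eps He.
  eapply filter_imp; [|apply filter_and; [exact Hrf|exact (cont_nn_right_ball r eps Hr He)]].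
  intros x [H1 H2]; apply Rabs_def2 in H2; lra.
Qed.

Lemma right_liminf_ge_plus (f g : R -> R) (Lf Lg : R) :
  right_liminf_ge f Lf t -> right_liminf_ge g Lg t ->
  right_liminf_ge (fun x => f x + g x) (Lf + Lg) t.
Proof.
  intros Hf Hg eps He.
  eapply filter_imp; [|apply filter_and; [apply (Hf (eps / 2))|apply (Hg (eps / 2))]]; try lra.
  intros x [H1 H2]; lra.
Qed.

Lemma right_liminf_ge_scal (c : R) (f : R -> R) (L : R) :
  0 <= c -> right_liminf_ge f L t -> right_liminf_ge (fun x => c * f x) (c * L) t.
Proof.
  intros Hc Hf eps He.
  assert (Hd : 0 < eps / (c + 1)) by (apply Rdiv_lt_0_compat; lra).
  eapply filter_imp; [|apply (Hf _ Hd)]; intros x Hx.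
  assert (c * (eps / (c + 1)) <= eps).
  { apply (Rmult_le_reg_r (c + 1)); [lra|]. field_simplify; lra. }
  apply (Rmult_le_compat_l c) in Hx; lra.
Qed.

Lemma right_liminf_ge_sumR (k : nat) (f : nat -> R -> R) (L : nat -> R) :
  (forall i, (i < k)%nat -> right_liminf_ge (f i) (L i) t) ->
  right_liminf_ge (fun x => sumR k (fun i => f i x)) (sumR k L) t.
Proof.
  induction k as [|k IH]; intros Hf; simpl.
  - intros eps He; apply filter_forall; intros; lra.
  - apply right_liminf_ge_plus; [apply IH; intros i Hi|]; apply Hf; lia.
Qed.

Lemma upper_rdini_le_of_right_slope (f r : R -> R) :
  cont_nn r t -> at_right t (fun x => f x - f t <= (x - t) * r x) -> upper_rdini_le f (r t) t.
Proof.
  intros Hr Hf eps He.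
  eapply filter_imp; [|apply filter_and;
    [apply at_right_gt|apply filter_and; [exact Hf|exact (cont_nn_right_ball r eps Hr He)]]].
  intros x (Hx & H1 & H2); apply Rabs_def2 in H2; nra.
Qed.

Lemma upper_rdini_le_of_slope (f : R -> R) (d : R) :
  has_slope_nn f d t -> upper_rdini_le f d t.
Proof.
  intros Hf; assert (Hc := Hf); destruct Hc as (q & Hq & <- & Hfq).
  apply upper_rdini_le_of_right_slope; [exact Hq|].
  apply filter_forall; intros x; rewrite (Hfq x); lra.
Qed.

Lemma upper_rdini_le_plus (f g : R -> R) (Lf Lg : R) :
  upper_rdini_le f Lf t -> upper_rdini_le g Lg t ->
  upper_rdini_le (fun x => f x + g x) (Lf + Lg) t.
Proof.
  intros Hf Hg eps He.
  eapply filter_imp; [|apply filter_and; [apply (Hf (eps / 2))|apply (Hg (eps / 2))]]; try lra.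
  intros x [H1 H2]; lra.
Qed.

Lemma upper_rdini_le_scal (c : R) (f : R -> R) (L : R) :
  0 <= c -> upper_rdini_le f L t -> upper_rdini_le (fun x => c * f x) (c * L) t.
Proof.
  intros Hc Hf eps He.
  assert (Hd : 0 < eps / (c + 1)) by (apply Rdiv_lt_0_compat; lra).
  eapply filter_imp; [|apply filter_and; [apply at_right_gt|apply (Hf _ Hd)]].
  intros x [Hx H].
  assert (c * (eps / (c + 1)) <= eps).
  { apply (Rmult_le_reg_r (c + 1)); [lra|]. field_simplify; lra. }
  apply (Rmult_le_compat_l c) in H; nra.
Qed.

Lemma upper_rdini_le_sumR (k : nat) (f : nat -> R -> R) (L : nat -> R) :
  (forall i, (i < k)%nat -> upper_rdini_le (f i) (L i) t) ->
  upper_rdini_le (fun x => sumR k (fun i => f i x)) (sumR k L) t.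
Proof.
  induction k as [|k IH]; intros Hf; simpl.
  - intros eps He; eapply filter_imp; [|apply at_right_gt]; intros; nra.
  - apply upper_rdini_le_plus; [apply IH; intros i Hi|]; apply Hf; lia.
Qed.

Lemma lower_rdini_ge_minus (f g : R -> R) (L : R) :
  lower_rdini_ge f L t -> upper_rdini_le g L t -> lower_rdini_ge (fun x => f x - g x) 0 t.
Proof.
  intros Hf Hg eps He.
  eapply filter_imp; [|apply filter_and; [apply (Hf (eps / 2))|apply (Hg (eps / 2))]]; try lra.
  intros x [H1 H2]; lra.
Qed.

End RightLimits.

Lemma sgn_mul_self (x : R) : sgn x * x = Rabs x.
Proof.
  unfold sgn; destruct (Rlt_dec 0 x); [|destruct (Rlt_dec x 0)]; split_Rabs; lra.
Qed.

Lemma sgn_mul_ge (x y : R) : - Rabs y <= sgn x * y.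
Proof.
  unfold sgn; destruct (Rlt_dec 0 x); [|destruct (Rlt_dec x 0)]; split_Rabs; lra.
Qed.

Lemma sgn_mul_pos (c y : R) : 0 < c -> sgn (c * y) = sgn y.
Proof.
  intros Hc; unfold sgn.
  destruct (Rlt_dec 0 (c * y)), (Rlt_dec 0 y); try reflexivity; try nra.
  destruct (Rlt_dec (c * y) 0), (Rlt_dec y 0); try reflexivity; nra.
Qed.

Lemma sgn_near (x y : R) : Rabs (y - x) < Rabs x -> sgn y = sgn x.
Proof.
  intros H; unfold sgn.
  destruct (Rlt_dec 0 y), (Rlt_dec 0 x); try reflexivity; split_Rabs; try lra;
  destruct (Rlt_dec y 0), (Rlt_dec x 0); try reflexivity; lra.
Qed.

Lemma sgn_eventually_const (a : R -> R) (t : R) :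
  0 <= t -> cont_nn a t -> a t <> 0 -> at_right t (fun x => sgn (a x) = sgn (a t)).
Proof.
  intros Ht Ha Hat.
  eapply filter_imp; [|apply (cont_nn_right_ball t Ht a _ Ha (Rabs_pos_lt _ Hat))].
  intros x; apply sgn_near.
Qed.

(* The right derivative of [|f|] at a point where [f = a] and [f' = b]. *)
Definition abs_rderiv (a b : R) : R := if Req_dec_T a 0 then Rabs b else sgn a * b.

Section AbsoluteValue.
Variables (e e' : R -> R) (t : R).
Hypotheses (Ht : 0 <= t) (He : has_slope_nn e (e' t) t).

Lemma right_liminf_sgn_mul :
  cont_nn e' t -> right_liminf_ge (fun x => sgn (e x) * e' x) (abs_rderiv (e t) (e' t)) t.
Proof.
  intros He'; assert (Hec := has_slope_cont _ _ _ He).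
  destruct He as (q & Hq & Hqt & Hqe).
  unfold abs_rderiv; destruct (Req_dec_T (e t) 0) as [E0|E0].
  - destruct (Req_dec_T (e' t) 0) as [D0|D0].
    + replace (Rabs (e' t)) with (- Rabs (e' t)) by (rewrite D0, Rabs_R0; ring).
      apply (right_liminf_ge_of_cont _ Ht _ (fun x => - Rabs (e' x))); auto with cont_nn.
      apply filter_forall; intros x; apply sgn_mul_ge.
    + rewrite <- sgn_mul_self.
      apply (right_liminf_ge_of_cont _ Ht _ (fun x => sgn (e' t) * e' x)); auto with cont_nn.
      rewrite <- Hqt in D0 |- *.
      eapply filter_imp;
        [|apply filter_and; [apply at_right_gt|apply (sgn_eventually_const _ _ Ht Hq D0)]].
      intros x [Hx Hsq]; rewrite (Hqe x), E0, Rplus_0_l, sgn_mul_pos, Hsq by lra; lra.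
  - apply (right_liminf_ge_of_cont _ Ht _ (fun x => sgn (e t) * e' x)); auto with cont_nn.
    eapply filter_imp; [|apply (sgn_eventually_const _ _ Ht Hec E0)].
    intros x Hs; rewrite Hs; lra.
Qed.

Lemma upper_rdini_abs : upper_rdini_le (fun x => Rabs (e x)) (abs_rderiv (e t) (e' t)) t.
Proof.
  assert (Hec := has_slope_cont _ _ _ He).
  destruct He as (q & Hq & Hqt & Hqe).
  unfold abs_rderiv; rewrite <- Hqt; destruct (Req_dec_T (e t) 0) as [E0|E0].
  - apply (upper_rdini_le_of_right_slope _ Ht _ (fun x => Rabs (q x))); auto with cont_nn.
    eapply filter_imp; [|apply at_right_gt]; intros x Hx.
    rewrite (Hqe x), E0, Rplus_0_l, Rabs_R0, Rabs_mult, (Rabs_right (x - t)) by lra; lra.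
  - apply (upper_rdini_le_of_right_slope _ Ht _ (fun x => sgn (e t) * q x)); auto with cont_nn.
    eapply filter_imp; [|apply (sgn_eventually_const _ _ Ht Hec E0)].
    intros x Hs; rewrite <- !sgn_mul_self, Hs, (Hqe x); lra.
Qed.

End AbsoluteValue.

Lemma ball_between (t u x : R) (d : posreal) :
  ball t d u -> t < x <= u -> ball t d x.
Proof.
  intros Hu Hx; change (Rabs (u - t) < d) in Hu; change (Rabs (x - t) < d); split_Rabs; lra.
Qed.

Lemma lower_rdini_ge_of_RInt (F Om : R -> R) (L t : R) :
  (forall u, t < u -> is_RInt F t u (Om u - Om t)) ->
  right_liminf_ge F L t -> lower_rdini_ge Om L t.
Proof.
  intros HI HF eps He; destruct (HF eps He) as [d Hd]; exists d; intros u Hu Htu.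
  assert (H := is_RInt_le (fun _ => L - eps) F t u _ _ (Rlt_le _ _ Htu)
                 (is_RInt_const t u (L - eps)) (HI u Htu)).
  change (scal (u - t) (L - eps)) with ((u - t) * (L - eps)) in H.
  enough ((u - t) * (L - eps) <= Om u - Om t) by lra.
  apply H; intros x Hx; apply Hd; [apply (ball_between t u); [exact Hu|]|]; lra.
Qed.

Lemma drop_le_of_lower_rdini_ge (g : R -> R) (T ep : R) :
  0 <= T -> 0 < ep ->
  (forall t, 0 <= t < T -> lower_rdini_ge g 0 t) ->
  (forall t, 0 < t <= T -> cont_nn g t) ->
  g 0 - ep * T <= g T.
Proof.
  intros HT Hep Hr Hl.
  (* [c] is the supremum of the points up to which [g] stays above the line [g 0 - ep y]:
     left continuity puts [c] itself in that set, and the right Dini bound at [c] would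
     extend the set beyond [c] unless [c = T]. *)
  set (E := fun x => 0 <= x <= T /\ forall y, 0 <= y <= x -> g 0 - ep * y <= g y).
  assert (HE0 : E 0) by (split; [lra|intros y Hy; replace y with 0 by lra; lra]).
  destruct (completeness E (ex_intro _ T (fun x Hx => proj2 (proj1 Hx))) (ex_intro _ 0 HE0))
    as [c [Hub Hlub]].
  assert (Hc0 : 0 <= c) by (apply Hub, HE0).
  assert (HcT : c <= T) by (apply Hlub; intros x Hx; apply Hx).
  assert (Hbelow : forall y, 0 <= y < c -> g 0 - ep * y <= g y).
  { intros y Hy; destruct (classic (exists x, E x /\ y < x)) as [[x [Hx Hyx]]|Hn].
    - apply Hx; lra.
    - exfalso; enough (c <= y) by lra.
      apply Hlub; intros x Hx; apply Rnot_lt_le; intros Hyx; apply Hn; now exists x. }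
  assert (Hc : g 0 - ep * c <= g c).
  { destruct (Req_dec_T c 0) as [->|Hc]; [lra|].
    apply Rle_plus_epsilon; intros eta Heta.
    destruct (cont_nn_ball _ _ _ (Hl c ltac:(lra)) Heta) as [d Hd].
    set (u := c - Rmin d c / 2).
    assert (Hm := Rmin_l d c); assert (Hm' := Rmin_r d c).
    assert (0 < Rmin d c) by (apply Rmin_pos; [apply cond_pos|lra]).
    assert (Hu : 0 <= u < c) by (unfold u; lra).
    assert (Hgu := Hd u ltac:(change (Rabs (u - c) < d); unfold u; split_Rabs; lra) ltac:(lra)).
    assert (ep * u <= ep * c) by (apply Rmult_le_compat_l; lra).
    apply Rabs_def2 in Hgu; generalize (Hbelow u Hu); lra. }
  assert (HEc : E c).
  { split; [lra|]; intros y Hy; destruct (Req_dec_T y c) as [->|]; [exact Hc|apply Hbelow; lra]. }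
  enough (c = T) by (subst; now apply HEc).
  destruct (Req_dec_T c T) as [|HcT']; [easy|exfalso].
  destruct (Hr c ltac:(lra) ep Hep) as [d Hd].
  set (u := c + Rmin d (T - c) / 2).
  assert (Hm := Rmin_l d (T - c)); assert (Hm' := Rmin_r d (T - c)).
  assert (0 < Rmin d (T - c)) by (apply Rmin_pos; [apply cond_pos|lra]).
  enough (E u) by (assert (u <= c) by (apply Hub; auto); unfold u in *; lra).
  split; [unfold u; lra|]; intros y Hy.
  destruct (Rle_dec y c) as [Hyc|Hyc]; [apply HEc; lra|].
  assert (Hgy := Hd y ltac:(change (Rabs (y - c) < d); unfold u in Hy; split_Rabs; lra) ltac:(lra)).
  nra.
Qed.

Lemma nondecreasing_of_lower_rdini_ge (g : R -> R) (T : R) :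
  0 <= T ->
  (forall t, 0 <= t < T -> lower_rdini_ge g 0 t) ->
  (forall t, 0 < t <= T -> cont_nn g t) ->
  g 0 <= g T.
Proof.
  intros HT Hr Hl; apply Rle_plus_epsilon; intros eps He.
  assert (Hep : 0 < eps / (T + 1)) by (apply Rdiv_lt_0_compat; lra).
  assert (H := drop_le_of_lower_rdini_ge g T _ HT Hep Hr Hl).
  enough (eps / (T + 1) * T <= eps) by lra.
  apply (Rmult_le_reg_r (T + 1)); [lra|]; field_simplify; lra.
Qed.

Lemma is_RInt_from_origin (F Om : R -> R) (t u : R) :
  (forall x, 0 <= x -> is_RInt F 0 x (Om x - Om 0)) -> 0 <= t -> 0 <= u ->
  is_RInt F t u (Om u - Om t).
Proof.
  intros HI Ht Hu.
  assert (H := is_RInt_Chasles F t 0 u _ _ (is_RInt_swap _ _ _ _ (HI t Ht)) (HI u Hu)).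
  replace (Om u - Om t) with (plus (opp (Om t - Om 0)) (Om u - Om 0)); [exact H|].
  unfold plus, opp; simpl; ring.
Qed.

Lemma cont_nn_of_RInt (F Om : R -> R) (t : R) :
  (forall x, 0 <= x -> is_RInt F 0 x (Om x - Om 0)) -> 0 < t -> cont_nn Om t.
Proof.
  intros HI Ht.
  assert (Hc : continuous (fun x => Om x - Om 0) t).
  { apply (continuous_RInt_1 F 0 t); exists (mkposreal t Ht); intros z Hz.
    apply HI; change (Rabs (z - t) < t) in Hz; split_Rabs; lra. }
  apply (cont_nn_ext (fun x => (Om x - Om 0) + Om 0)); [intros; ring|].
  apply cont_nn_plus; [|apply cont_nn_const].
  exact (filterlim_filter_le_1 _ (filter_le_within _) Hc).
Qed.

Lemma sub_potential_nondecreasing (F P Om : R -> R) :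
  (forall t, 0 <= t -> is_RInt F 0 t (Om t - Om 0)) ->
  (forall t, 0 <= t -> exists L, right_liminf_ge F L t /\ upper_rdini_le P L t) ->
  (forall t, 0 < t -> cont_nn P t) ->
  forall T, 0 <= T -> Om 0 - P 0 <= Om T - P T.
Proof.
  intros HI Hrate HP T HT.
  apply (nondecreasing_of_lower_rdini_ge (fun x => Om x - P x) T HT).
  - intros t Ht; destruct (Hrate t (proj1 Ht)) as (L & HF & HPL).
    apply (lower_rdini_ge_minus t _ _ L); [|exact HPL].
    apply (lower_rdini_ge_of_RInt F); [|exact HF].
    intros u Hu; apply is_RInt_from_origin; [exact HI|lra|lra].
  - intros t Ht; apply cont_nn_minus; [apply (cont_nn_of_RInt F)|apply HP]; auto; lra.
Qed.

(* Coordinate [i] of the integrand of [Omega] and of [Omega 0], for [N = d3' + D'], [M = M1]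
   and [Q = M2]; [comp_rate] is the right derivative of [comp_potential]. *)
Definition comp_integrand (al be : R) (e e' N M Q : R -> R) (x : R) : R :=
  - ((e' x + al * e x) * (N x - be * sgn (e x))) - M x * e' x - Q x * e x.

Definition comp_potential (be : R) (e N M : R -> R) (x : R) : R :=
  be * Rabs (e x) - e x * (N x + M x).

Definition comp_rate (be : R) (e e' N M : R -> R) (dN dM t : R) : R :=
  be * abs_rderiv (e t) (e' t) - (e' t * (N t + M t) + e t * (dN + dM)).

Lemma comp_potential_nonneg (be : R) (e N M : R -> R) (x : R) :
  Rabs (N x + M x) <= be -> 0 <= comp_potential be e N M x.
Proof.
  intros Hb; unfold comp_potential.
  assert (e x * (N x + M x) <= Rabs (e x) * be).
  { eapply Rle_trans; [apply Rle_abs|].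
    rewrite Rabs_mult; apply Rmult_le_compat_l; [apply Rabs_pos|exact Hb]. }
  lra.
Qed.

Section Component.
Variables (al be : R) (e e' N M Q : R -> R) (dN dM t : R).
Hypotheses (Hbe : 0 <= be) (Ht : 0 <= t)
  (He : has_slope_nn e (e' t) t) (HN : has_slope_nn N dN t) (HM : has_slope_nn M dM t).

Lemma comp_potential_cont : cont_nn (comp_potential be e N M) t.
Proof.
  assert (Hec := has_slope_cont _ _ _ He); assert (HNc := has_slope_cont _ _ _ HN).
  assert (HMc := has_slope_cont _ _ _ HM).
  unfold comp_potential; auto with cont_nn.
Qed.

Lemma comp_potential_rdini :
  upper_rdini_le (comp_potential be e N M) (comp_rate be e e' N M dN dM t) t.
Proof.
  apply (upper_rdini_le_plus t (fun x => be * Rabs (e x)) (fun x => - (e x * (N x + M x)))).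
  - apply (upper_rdini_le_scal t be (fun x => Rabs (e x))); [exact Hbe|].
    now apply upper_rdini_abs.
  - apply upper_rdini_le_of_slope; [exact Ht|].
    apply (has_slope_opp t (fun x => e x * (N x + M x))).
    apply (has_slope_mult t e (fun x => N x + M x)); [exact He|].
    now apply has_slope_plus.
Qed.

Lemma comp_integrand_liminf :
  cont_nn e' t -> cont_nn Q t -> Rabs (- al * N t - Q t + dN + dM) <= al * be ->
  right_liminf_ge (comp_integrand al be e e' N M Q) (comp_rate be e e' N M dN dM t) t.
Proof.
  intros He' HQ Hgain.
  assert (Hec := has_slope_cont _ _ _ He); assert (HNc := has_slope_cont _ _ _ HN).
  assert (HMc := has_slope_cont _ _ _ HM).
  set (C := fun x => - ((e' x + al * e x) * N x) - M x * e' x - Q x * e x + al * be * Rabs (e x)).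
  assert (Hsplit : forall x, comp_integrand al be e e' N M Q x = C x + be * (sgn (e x) * e' x)).
  { intros x; unfold comp_integrand, C; rewrite <- sgn_mul_self; ring. }
  assert (Hlim : right_liminf_ge (fun x => C x + be * (sgn (e x) * e' x))
                   (C t + be * abs_rderiv (e t) (e' t)) t).
  { apply right_liminf_ge_plus.
    - apply (right_liminf_ge_of_cont t Ht C C); [unfold C; auto 20 with cont_nn|].
      apply filter_forall; intros; lra.
    - apply (right_liminf_ge_scal t be (fun x => sgn (e x) * e' x)); [exact Hbe|].
      now apply right_liminf_sgn_mul. }
  assert (Hrate : comp_rate be e e' N M dN dM t <= C t + be * abs_rderiv (e t) (e' t)).
  { unfold comp_rate, C.
    enough (0 <= al * be * Rabs (e t) + e t * (- al * N t - Q t + dN + dM)) by lra.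
    assert (Hp := Rle_abs (- (e t * (- al * N t - Q t + dN + dM)))).
    rewrite Rabs_Ropp, Rabs_mult in Hp.
    assert (Rabs (e t) * Rabs (- al * N t - Q t + dN + dM) <= Rabs (e t) * (al * be))
      by (apply Rmult_le_compat_l; [apply Rabs_pos|exact Hgain]).
    lra. }
  intros eps Heps; eapply filter_imp; [|apply (Hlim eps Heps)].
  intros x Hx; rewrite Hsplit; lra.
Qed.

End Component.

Lemma Omega_nonneg_of_components (n : nat) (al be : R) (e e' N M Q dN dM : nat -> R -> R)
  (Omega : R -> R) :
  0 <= be ->
  (forall i t, (i < n)%nat -> 0 <= t ->
     has_slope_nn (e i) (e' i t) t /\ cont_nn (e' i) t /\
     has_slope_nn (N i) (dN i t) t /\ has_slope_nn (M i) (dM i t) t /\ cont_nn (Q i) t) ->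
  (forall i t, (i < n)%nat -> 0 <= t ->
     Rabs (N i t + M i t) <= be /\ Rabs (- al * N i t - Q i t + dN i t + dM i t) <= al * be) ->
  (forall t, 0 <= t ->
     is_RInt (fun x => sumR n (fun i => comp_integrand al be (e i) (e' i) (N i) (M i) (Q i) x))
       0 t (Omega t - Omega 0)) ->
  Omega 0 = sumR n (fun i => comp_potential be (e i) (N i) (M i) 0) ->
  forall t, 0 <= t -> 0 <= Omega t.
Proof.
  intros Hbe Hreg Hbnd HI HO0 T HT.
  set (P := fun x => sumR n (fun i => comp_potential be (e i) (N i) (M i) x)).
  assert (HPT : 0 <= P T).
  { apply sumR_nonneg; intros i Hi; apply comp_potential_nonneg, (Hbnd i T Hi HT). }
  enough (Omega 0 - P 0 <= Omega T - P T) by (unfold P in *; lra).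
  apply (sub_potential_nondecreasing _ _ _ HI); [intros t Ht|intros t Ht|exact HT].
  - exists (sumR n (fun i => comp_rate be (e i) (e' i) (N i) (M i) (dN i t) (dM i t) t)).
    split; [apply right_liminf_ge_sumR|apply upper_rdini_le_sumR]; intros i Hi;
      destruct (Hreg i t Hi Ht) as (He & He' & HN & HM & HQ).
    + apply comp_integrand_liminf; auto; apply (Hbnd i t Hi Ht).
    + now apply comp_potential_rdini.
  - apply cont_nn_sumR; intros i Hi; destruct (Hreg i t Hi ltac:(lra)) as (He & _ & HN & HM & _).
    now apply (comp_potential_cont be (e i) (e' i) (N i) (M i) (dN i t) (dM i t)).
Qed.

Lemma gain_condition_componentwise (al be a b m q a' b' m' A B Mb Qb A' B' Mb' : R) :
  0 < al ->
  Rabs a <= A -> Rabs b <= B -> Rabs m <= Mb -> Rabs q <= Qb ->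
  Rabs a' <= A' -> Rabs b' <= B' -> Rabs m' <= Mb' ->
  be >= A + B + Mb + / al * (A' + B' + Mb' + Qb) ->
  Rabs (a + b + m) <= be /\ Rabs (- al * (a + b) - q + (a' + b') + m') <= al * be.
Proof.
  intros Hal Ha Hb Hm Hq Ha' Hb' Hm' Hbe.
  apply Rabs_le_between in Ha, Hb, Hm, Hq, Ha', Hb', Hm'.
  assert (Hscaled : al * (/ al * (A' + B' + Mb' + Qb)) = A' + B' + Mb' + Qb) by (field; lra).
  assert (0 <= / al * (A' + B' + Mb' + Qb))
    by (apply Rmult_le_pos; [apply Rlt_le, Rinv_0_lt_compat, Hal|lra]).
  split; apply Rabs_le_between; split; nra.
Qed.

Theorem lemma1
  (n lz lc : nat) (Hn : (1 <= n)%nat) (Hlz : (1 <= lz)%nat) (Hlc : (1 <= lc)%nat)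
  (alpha beta_d : R) (Halpha : 0 < alpha) (Hbeta : 0 < beta_d)
  (* e with derivative e' *)
  (e e' : R -> nat -> R)
  (* delta_3 with first and second derivatives *)
  (d3 d3' d3'' : R -> nat -> R)
  (* D with first and second derivatives *)
  (D D' D'' : R -> nat -> R)
  (* tilde z_j, w_j and their derivatives, j = 0 .. lz-1 *)
  (zt zt' : nat -> R -> R) (w w' : nat -> R -> nat -> R)
  (* Lambda_j, v in R^lc and tilde w_j in R^n *)
  (Lam : nat -> R -> nat -> R) (v : R -> nat -> R) (wt : nat -> R -> nat -> R)
  (He : vC1_on0 n e e')
  (Hd3 : vC1_on0 n d3 d3') (Hd3' : vC1_on0 n d3' d3'')
  (HD : vC1_on0 n D D') (HD' : vC1_on0 n D' D'')
  (Hz : forall j, (j < lz)%nat -> C1_on0 (zt j) (zt' j))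
  (Hw : forall j, (j < lz)%nat -> vC1_on0 n (w j) (w' j))
  (HLam : forall j, (j < lz)%nat -> vcont_on0 lc (Lam j))
  (Hv : vcont_on0 lc v)
  (Hwt : forall j, (j < lz)%nat -> vcont_on0 n (wt j))
  (bd3' bd3'' cd1 cd2 cM1 cM1' cM2 : R)
  (Hpos : 0 < bd3' /\ 0 < bd3'' /\ 0 < cd1 /\ 0 < cd2 /\ 0 < cM1 /\ 0 < cM1' /\ 0 < cM2) :
  let s := fun t i => e' t i + alpha * e t i in
  let M1 := fun t i => sumR lz (fun j => zt j t * w j t i) in
  (* M1' is the time derivative of M1 (product rule) *)
  let M1' := fun t i => sumR lz (fun j => zt' j t * w j t i + zt j t * w' j t i) in
  let M2 := fun t i => sumR lz (fun j => dotR lc (Lam j t) (v t) * wt j t i) in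
  (forall t, 0 <= t ->
     norm1 n (d3' t) < bd3' /\ norm1 n (d3'' t) < bd3'' /\
     norm2 n (D' t) <= cd1 /\ norm2 n (D'' t) <= cd2 /\
     norm1 n (M1 t) < cM1 /\ norm1 n (M1' t) < cM1' /\ norm1 n (M2 t) < cM2) ->
  forall Omega : R -> R,
  Omega 0 = beta_d * norm1 n (e 0)
            - dotR n (e 0) (fun i => d3' 0 i + D' 0 i + M1 0 i) ->
  (forall t, 0 <= t ->
     is_RInt (fun tau =>
         - dotR n (s tau) (fun i => d3' tau i + D' tau i - beta_d * sgn (e tau i))
         - dotR n (M1 tau) (e' tau)
         - dotR n (M2 tau) (e tau))
       0 t (Omega t - Omega 0)) ->
  beta_d >= bd3' + cd1 + cM1 + / alpha * (bd3'' + cd2 + cM1' + cM2) ->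
  forall t, 0 <= t -> Omega t >= 0.
Proof.
  intros s M1 M1' M2 Hb Omega HO0 HInt Hbd t Ht.
  apply Rle_ge, (Omega_nonneg_of_components n alpha beta_d
    (fun i x => e x i) (fun i x => e' x i) (fun i x => d3' x i + D' x i)
    (fun i x => M1 x i) (fun i x => M2 x i) (fun i x => d3'' x i + D'' x i)
    (fun i x => M1' x i)); [lra| | | | |exact Ht].
  - intros i x Hi Hx; repeat split.
    + exact (has_slope_of_deriv_on0 _ _ _ (proj1 (He i Hi)) Hx).
    + exact (proj2 (He i Hi) x Hx).
    + apply has_slope_plus.
      * exact (has_slope_of_deriv_on0 _ _ _ (proj1 (Hd3' i Hi)) Hx).
      * exact (has_slope_of_deriv_on0 _ _ _ (proj1 (HD' i Hi)) Hx).
    + apply (has_slope_sumR_mult lz zt zt' (fun j y => w j y i) (fun j y => w' j y i)); auto.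
      intros j Hj; exact (Hw j Hj i Hi).
    + apply (cont_nn_sumR x lz (fun j y => dotR lc (Lam j y) (v y) * wt j y i)); intros j Hj.
      apply cont_nn_mult; [apply cont_nn_dotR; intros k Hk|exact (Hwt j Hj i Hi x Hx)].
      * exact (HLam j Hj k Hk x Hx).
      * exact (Hv k Hk x Hx).
  - intros i x Hi Hx; destruct (Hb x Hx) as (B1 & B2 & B3 & B4 & B5 & B6 & B7).
    refine (gain_condition_componentwise _ _ _ _ _ _ _ _ _ _ _ _ _ _ _ _ Halpha _ _ _ _ _ _ _ Hbd);
      first [ apply (Rle_trans _ _ _ (Rabs_le_norm1 _ _ _ Hi)); lra
            | apply (Rle_trans _ _ _ (Rabs_le_norm2 _ _ _ Hi)); lra ].
  - intros x Hx; eapply is_RInt_ext; [|exact (HInt x Hx)]; intros y _.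
    unfold dotR; rewrite <- sumR_opp, <- !sumR_minus; apply sumR_ext; intros i Hi.
    unfold comp_integrand, s; ring.
  - rewrite HO0; unfold norm1, dotR, comp_potential; rewrite <- sumR_scal, <- sumR_minus.
    reflexivity.
Qed.
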